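(* Let $\sum_{n=1}^{\infty}x_n$ be a divergent series of positive real terms with $\lim_{n\to\infty}x_n=0$, and let $S=\{\sum_{n=1}^{\infty}(x_n-x_{\sigma(n)}) : \sigma\in S_\infty,\ \text{the series converges}\}$. Then either $S=\mathbb{R}$ or $S$ is a halfline bounded from below, i.e. there is $c\in\mathbb{R}$ with $S=[c,\infty)$ or $S=(c,\infty)$.
   Context: $S_\infty$ denotes the set of all permutations of $\mathbb{N}$. *)

From Stdlib Require Import Reals.
Open Scope R_scope.

Definition is_perm_nat (sigma : nat -> nat) : Prop :=
  (forall m n, sigma m = sigma n -> m = n) /\ (forall k, exists n, sigma n = k).

Definition rearr_diff_sum (x : nat -> R) (sigma : nat -> nat) (s : R) : Prop :=
  Un_cv (fun N => sum_f_R0 (fun n => x n - x (sigma n)) N) s.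

Definition S_set (x : nat -> R) (s : R) : Prop :=
  exists sigma, is_perm_nat sigma /\ rearr_diff_sum x sigma s.

From Stdlib Require Import Reals Lra Lia List ClassicalEpsilon Classical Permutation.
Import ListNotations.
Open Scope R_scope.

(* Composing permutations shows that S is closed under adding any d > 0 as soon as
   every d > 0 is a sum of (y_n - y_(pi n)) for every positive, null, divergent y
   (a rearrangement of x keeps these properties); together with 0 in S (pi = id)
   this forces S to be R or a half-line.

   To realise d, pi is built greedily.  The backlog at step n is the set of indices
   <= n not used yet.  If the backlog minus its largest term still has mass >= d,
   step n releases that largest index; otherwise it brings forward a fresh index > n
   whose term is at most 2^-n.  The N-th partial sum is the backlog mass minus the
   mass of the indices brought forward beyond N.  The latter tends to 0; the former
   is eventually >= d, and eventually at most d plus the largest pending term, which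
   tends to 0 because every index is eventually used. *)

Definition lsum (f : nat -> R) (l : list nat) : R :=
  fold_right (fun j s => f j + s) 0 l.

Lemma lsum_app f l1 l2 : lsum f (l1 ++ l2) = lsum f l1 + lsum f l2.
Proof. induction l1; simpl; [lra | rewrite IHl1; lra]. Qed.

Lemma lsum_perm f l l' : Permutation l l' -> lsum f l = lsum f l'.
Proof. intro H; induction H; simpl; lra. Qed.

Lemma lsum_filter_negb f (p : nat -> bool) l :
  lsum f l = lsum f (filter p l) + lsum f (filter (fun j => negb (p j)) l).
Proof. induction l; simpl; [lra |]. destruct (p a); simpl; rewrite IHl; lra. Qed.

Lemma lsum_nonneg f l : (forall j, In j l -> 0 <= f j) -> 0 <= lsum f l.
Proof.
  induction l as [|a l IH]; simpl; intro H; [lra |].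
  assert (0 <= f a) by auto. assert (0 <= lsum f l) by auto. lra.
Qed.

Lemma lsum_seq0 f N : lsum f (seq 0 (S N)) = sum_f_R0 f N.
Proof. induction N; [simpl; lra |]. rewrite seq_S, lsum_app, IHN. simpl. lra. Qed.

Lemma lsum_map f g l : lsum f (map g l) = lsum (fun i => f (g i)) l.
Proof. induction l; simpl; [lra | rewrite IHl; lra]. Qed.

Lemma lsum_incl f l l' : (forall j, 0 <= f j) -> NoDup l -> NoDup l' -> incl l l' ->
  lsum f l <= lsum f l'.
Proof.
  intros Hf Hl Hl' Hi.
  set (in_l := fun j => if in_dec Nat.eq_dec j l then true else false).
  assert (Hperm : Permutation l (filter in_l l')).
  { apply NoDup_Permutation; [auto | apply NoDup_filter; auto |].
    intro j; rewrite filter_In; unfold in_l.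
    destruct (in_dec Nat.eq_dec j l); split; intuition; discriminate. }
  rewrite (lsum_filter_negb f in_l l'), <- (lsum_perm f _ _ Hperm).
  assert (0 <= lsum f (filter (fun j => negb (in_l j)) l')) by (apply lsum_nonneg; auto).
  lra.
Qed.

Lemma In_le_list_max j l : In j l -> (j <= list_max l)%nat.
Proof.
  intro H. pose proof (proj1 (list_max_le l (list_max l)) (le_n _)) as Hf.
  rewrite Forall_forall in Hf. auto.
Qed.

Lemma unbounded_NoDup_list (P : nat -> Prop) :
  (forall n0, exists n, (n0 <= n)%nat /\ P n) ->
  forall n0 m, exists l, length l = m /\ NoDup l /\ forall i, In i l -> (n0 <= i)%nat /\ P i.
Proof.
  intros HP n0 m. induction m as [|m (l & Hlen & Hnd & Hl)].
  - exists []. split; [reflexivity | split; [constructor | intros i []]].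
  - destruct (HP (S (n0 + list_max l))) as (n & Hn & Pn).
    exists (n :: l). split; [simpl; auto | split].
    + constructor; auto. intro H. apply In_le_list_max in H. lia.
    + intros i [<- | H]; [split; auto; lia | auto].
Qed.

Lemma surj_initial_segment (s : nat -> nat) :
  (forall k, exists n, s n = k) ->
  forall N, exists M, forall k, (k < N)%nat -> exists m, (m < M)%nat /\ s m = k.
Proof.
  intros Hs N. induction N as [|N [M HM]].
  - exists 0%nat. intros; lia.
  - destruct (Hs N) as [p Hp]. exists (Nat.max M (S p)). intros k Hk.
    destruct (Nat.eq_dec k N) as [-> | Hne].
    + exists p. split; [lia | auto].
    + destruct (HM k ltac:(lia)) as (m & Hm & E). exists m. split; [lia | auto].
Qed.

Lemma half_pow_pos n : 0 < (/2)^n.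
Proof. apply pow_lt. lra. Qed.

Lemma sum_half_pow_from m N :
  sum_f_R0 (fun i => if Nat.leb m i then (/2)^i else 0) N <= 2 * (/2)^m.
Proof.
  enough (E : sum_f_R0 (fun i => if Nat.leb m i then (/2)^i else 0) N =
              if Nat.leb m N then 2 * (/2)^m - 2 * (/2)^(S N) else 0).
  { rewrite E. pose proof (half_pow_pos m). pose proof (half_pow_pos (S N)).
    destruct (Nat.leb m N); lra. }
  induction N as [|N IH].
  - simpl. destruct m; simpl; lra.
  - cbn [sum_f_R0]. rewrite IH.
    destruct (Nat.leb_spec m N), (Nat.leb_spec m (S N)); try lia.
    + simpl. lra.
    + replace m with (S N) by lia. simpl. lra.
    + lra.
Qed.

Lemma growing_eventually_bounded_cv (u : nat -> R) (n0 : nat) (M : R) :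
  Un_growing u -> (forall N, (n0 <= N)%nat -> u N <= M) -> exists l, Un_cv u l.
Proof.
  intros Hu HM. apply Un_cv_crit; [exact Hu |].
  exists M. intros z [N ->].
  apply Rle_trans with (u (Nat.max N n0)); [apply tech9; auto; lia | apply HM; lia].
Qed.

Lemma partial_sums_growing f : (forall n, 0 < f n) -> Un_growing (sum_f_R0 f).
Proof. intros H n. simpl. specialize (H (S n)). lra. Qed.

Lemma Un_cv_0_eventually_lt u eps : Un_cv u 0 -> 0 < eps ->
  exists N, forall n, (N <= n)%nat -> u n < eps.
Proof.
  intros Hu He. destruct (Hu eps He) as [N HN]. exists N. intros n Hn.
  specialize (HN n Hn). unfold R_dist in HN. rewrite Rminus_0_r in HN.
  apply Rabs_def2 in HN. lra.
Qed.

Lemma is_perm_nat_id : is_perm_nat (fun n => n).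
Proof. split; eauto. Qed.

Lemma is_perm_nat_comp s t :
  is_perm_nat s -> is_perm_nat t -> is_perm_nat (fun n => s (t n)).
Proof.
  intros [Is Ss] [It St]. split; [auto |].
  intro k. destruct (Ss k) as [m <-]. destruct (St m) as [n <-]. eauto.
Qed.

Lemma perm_eventually_ge s : is_perm_nat s ->
  forall N, exists M, forall m, (M <= m)%nat -> (N <= s m)%nat.
Proof.
  intros [Is Ss] N. destruct (surj_initial_segment s Ss N) as [M HM].
  exists M. intros m Hm. destruct (Nat.lt_ge_cases (s m) N) as [Hlt | Hge]; [| exact Hge].
  destruct (HM _ Hlt) as (m' & Hm' & E). apply Is in E. lia.
Qed.

Lemma Un_cv_perm_0 s x : is_perm_nat s -> Un_cv x 0 -> Un_cv (fun n => x (s n)) 0.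
Proof.
  intros Hs Hx eps He. destruct (Hx eps He) as [N HN].
  destruct (perm_eventually_ge s Hs N) as [M HM].
  exists M. intros n Hn. apply HN, HM. lia.
Qed.

Lemma perm_series_divergent s x : is_perm_nat s -> (forall n, 0 < x n) ->
  ~ (exists l, Un_cv (sum_f_R0 x) l) ->
  ~ (exists l, Un_cv (sum_f_R0 (fun n => x (s n))) l).
Proof.
  intros [Is Ss] Hpos Hdiv [L HL]. apply Hdiv.
  apply (growing_eventually_bounded_cv _ 0 L); [apply partial_sums_growing; auto |].
  intros N _. destruct (surj_initial_segment s Ss (S N)) as [M HM].
  apply Rle_trans with (sum_f_R0 (fun n => x (s n)) M).
  - rewrite <- !lsum_seq0, <- (lsum_map x s).
    apply lsum_incl; [intro; left; auto | apply seq_NoDup | |].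
    + apply FinFun.Injective_map_NoDup; [intros a b; apply Is | apply seq_NoDup].
    + intros k Hk. apply in_seq in Hk. destruct (HM k ltac:(lia)) as (m & Hm & <-).
      apply in_map, in_seq. lia.
  - apply growing_ineq; [apply partial_sums_growing; auto | exact HL].
Qed.

Lemma upward_closed_halfline (P : R -> Prop) :
  (exists s, P s) -> (forall s t, P s -> s < t -> P t) ->
  (forall r, P r) \/
  (exists c, (forall r, P r <-> c <= r) \/ (forall r, P r <-> c < r)).
Proof.
  intros [s0 Ps0] Hup.
  destruct (classic (forall r, exists s, P s /\ s < r)) as [Hunb | Hbdd].
  { left. intro r. destruct (Hunb r) as (s & Ps & Hsr). eauto. }
  right. apply not_all_ex_not in Hbdd. destruct Hbdd as [r0 Hr0].
  assert (Hlow : forall s, P s -> r0 <= s).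
  { intros s Ps. apply Rnot_lt_le. intro Hlt. apply Hr0. eauto. }
  (* the infimum of P, as minus the supremum of its reflection *)
  destruct (completeness (fun z => P (- z))) as [m [Hub Hleast]].
  { exists (- r0). intros z Hz. apply Hlow in Hz. lra. }
  { exists (- s0). rewrite Ropp_involutive. exact Ps0. }
  exists (- m).
  assert (Hge : forall s, P s -> - m <= s).
  { intros s Ps. enough (- s <= m) by lra. apply Hub. rewrite Ropp_involutive. exact Ps. }
  assert (Hgt : forall r, - m < r -> P r).
  { intros r Hr. apply NNPP. intro Hnot. enough (m <= - r) by lra.
    apply Hleast. intros z Pz. apply Rnot_lt_le. intro Hlt.
    apply Hnot, (Hup (- z)); [exact Pz | lra]. }
  destruct (classic (P (- m))) as [Pm | nPm]; [left | right]; intro r; split.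
  - apply Hge.
  - intro Hr. destruct (Req_dec (- m) r) as [<- | Hne]; [exact Pm | apply Hgt; lra].
  - intro Pr. pose proof (Hge r Pr).
    destruct (Req_dec (- m) r) as [E | Hne]; [subst r; contradiction | lra].
  - apply Hgt.
Qed.

Section Greedy.

Variables (y : nat -> R) (delta : R).
Hypotheses (y_pos : forall n, 0 < y n) (y_cv0 : Un_cv y 0)
  (y_div : ~ exists l, Un_cv (sum_f_R0 y) l) (delta_pos : 0 < delta).

Definition notinb (l : list nat) (j : nat) : bool :=
  if in_dec Nat.eq_dec j l then false else true.

Definition pending (n : nat) (l : list nat) : list nat := filter (notinb l) (seq 0 (S n)).

Fixpoint argmax_y (d : nat) (l : list nat) : nat :=
  match l with
  | [] => d
  | a :: t => if Rle_dec (y d) (y a) then argmax_y a t else argmax_y d t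
  end.

Definition small_fresh n l :=
  epsilon (inhabits 0%nat) (fun j => (n < j)%nat /\ ~ In j l /\ y j <= (/2)^n).

Definition greedy_choice (n : nat) (l : list nat) : nat :=
  match pending n l with
  | [] => small_fresh n l
  | a :: t =>
      if Rle_dec delta (lsum y (a :: t) - y (argmax_y a t)) then argmax_y a t
      else small_fresh n l
  end.

Fixpoint used (n : nat) : list nat :=
  match n with O => [] | S m => greedy_choice m (used m) :: used m end.

Definition greedy (n : nat) : nat := greedy_choice n (used n).

Definition release_step n := exists a t, pending n (used n) = a :: t /\
  delta <= lsum y (a :: t) - y (argmax_y a t) /\ greedy n = argmax_y a t.

Definition tiny_step n :=
  (pending n (used n) = [] \/ exists a t, pending n (used n) = a :: t /\
    lsum y (a :: t) - y (argmax_y a t) < delta) /\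
  greedy n = small_fresh n (used n).

Definition mass_before n := lsum y (pending n (used n)).
Definition backlog n := lsum y (pending n (used (S n))).
Definition mass_ahead N := lsum y (filter (Nat.ltb N) (used (S N))).

Lemma argmax_y_In d l : In (argmax_y d l) (d :: l).
Proof.
  revert d; induction l as [|a l IH]; intro d; simpl; [auto |].
  destruct (Rle_dec (y d) (y a)); [specialize (IH a) | specialize (IH d)]; simpl in IH; tauto.
Qed.

Lemma argmax_y_ge d l j : In j (d :: l) -> y j <= y (argmax_y d l).
Proof.
  revert d j; induction l as [|a l IH]; intros d j H; simpl in *.
  - destruct H as [<- | []]; lra.
  - destruct (Rle_dec (y d) (y a)).
    + destruct H as [<- | H]; [| apply IH; exact H].
      assert (y a <= y (argmax_y a l)) by (apply IH; left; auto). lra.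
    + destruct H as [<- | [<- | H]]; [apply IH; left; auto | | apply IH; right; auto].
      assert (y d <= y (argmax_y d l)) by (apply IH; left; auto). lra.
Qed.

Lemma In_pending j n l : In j (pending n l) <-> (j <= n)%nat /\ ~ In j l.
Proof.
  unfold pending, notinb. rewrite filter_In, in_seq.
  destruct (in_dec Nat.eq_dec j l); split; intuition (try discriminate; lia).
Qed.

Lemma pending_S n l : pending (S n) l =
  pending n l ++ (if in_dec Nat.eq_dec (S n) l then [] else [S n]).
Proof.
  unfold pending. rewrite (seq_S (S n)), filter_app. f_equal.
  simpl. unfold notinb. destruct (in_dec Nat.eq_dec (S n) l); auto.
Qed.

Lemma filter_notinb_cons_notin s a l :
  ~ In a s -> filter (notinb (a :: l)) s = filter (notinb l) s.
Proof.
  intro Ha. apply filter_ext_in. intros z Hz. unfold notinb.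
  destruct (in_dec Nat.eq_dec z (a :: l)) as [[E | H] | H];
    destruct (in_dec Nat.eq_dec z l); simpl in *; subst; tauto.
Qed.

Lemma lsum_filter_notinb_cons f s a l : NoDup s -> In a s -> ~ In a l ->
  lsum f (filter (notinb (a :: l)) s) = lsum f (filter (notinb l) s) - f a.
Proof.
  intros Hs Ha Hl. apply in_split in Ha. destruct Ha as (s1 & s2 & ->).
  apply NoDup_remove_2 in Hs. rewrite in_app_iff in Hs.
  assert (Hout : notinb (a :: l) a = false).
  { unfold notinb. destruct (in_dec Nat.eq_dec a (a :: l)) as [_ | Hn]; [auto |].
    exfalso. apply Hn. left. auto. }
  assert (Hin : notinb l a = true).
  { unfold notinb. destruct (in_dec Nat.eq_dec a l); [contradiction | auto]. }
  rewrite !filter_app. cbn [filter]. rewrite Hout, Hin, !lsum_app.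
  rewrite !filter_notinb_cons_notin by tauto. simpl. lra.
Qed.

Lemma small_fresh_spec n l :
  (n < small_fresh n l)%nat /\ ~ In (small_fresh n l) l /\ y (small_fresh n l) <= (/2)^n.
Proof.
  unfold small_fresh. apply epsilon_spec.
  destruct (Un_cv_0_eventually_lt y _ y_cv0 (half_pow_pos n)) as [N HN].
  set (j := (N + n + 1 + list_max l)%nat). exists j. split; [| split].
  - unfold j. lia.
  - intro H. apply In_le_list_max in H. unfold j in H. lia.
  - left. apply HN. unfold j. lia.
Qed.

Lemma release_or_tiny n : release_step n \/ tiny_step n.
Proof.
  unfold release_step, tiny_step, greedy, greedy_choice.
  destruct (pending n (used n)) as [|a t]; [right; auto |].
  destruct (Rle_dec delta (lsum y (a :: t) - y (argmax_y a t))).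
  - left. eauto.
  - right. split; [right; exists a, t; split; [auto | lra] | auto].
Qed.

Lemma release_pending n : release_step n -> In (greedy n) (pending n (used n)).
Proof. intros (a & t & Hp & _ & ->). rewrite Hp. apply argmax_y_In. Qed.

Lemma greedy_not_used n : ~ In (greedy n) (used n).
Proof.
  destruct (release_or_tiny n) as [HA | [_ ->]].
  - apply release_pending, In_pending in HA. tauto.
  - apply small_fresh_spec.
Qed.

Lemma greedy_le_or_small n : (greedy n <= n)%nat \/ y (greedy n) <= (/2)^n.
Proof.
  destruct (release_or_tiny n) as [HA | [_ ->]].
  - apply release_pending, In_pending in HA. left. tauto.
  - right. apply small_fresh_spec.
Qed.

Lemma In_used j n : In j (used n) <-> exists i, (i < n)%nat /\ greedy i = j.
Proof.
  induction n as [|n IH]; simpl.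
  - split; [tauto | intros (i & Hi & _); lia].
  - fold (greedy n). rewrite IH. split.
    + intros [H | (i & Hi & H)]; [exists n | exists i]; split; auto.
    + intros (i & Hi & H). destruct (Nat.eq_dec i n) as [-> | Hne]; [left; auto |].
      right. exists i. split; [lia | auto].
Qed.

Lemma greedy_inj i k : greedy i = greedy k -> i = k.
Proof.
  intro H. destruct (Nat.lt_total i k) as [L | [L | L]]; [exfalso | auto | exfalso].
  - apply (greedy_not_used k), In_used. eauto.
  - apply (greedy_not_used i), In_used. eauto.
Qed.

Lemma used_NoDup n : NoDup (used n).
Proof. induction n; simpl; constructor; auto. apply greedy_not_used. Qed.

Lemma used_length n : length (used n) = n.
Proof. induction n; simpl; auto. Qed.

Lemma lsum_filter_used f (p : nat -> bool) N :
  lsum f (filter p (used (S N))) =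
  sum_f_R0 (fun i => if p (greedy i) then f (greedy i) else 0) N.
Proof.
  induction N as [|N IH]; change (used (S ?n)) with (greedy n :: used n); cbn [filter sum_f_R0].
  - destruct (p (greedy 0%nat)); simpl; lra.
  - rewrite <- IH. change (used (S N)) with (greedy N :: used N).
    destruct (p (greedy (S N))); simpl; lra.
Qed.

Lemma partial_sum_backlog N :
  sum_f_R0 (fun n => y n - y (greedy n)) N = backlog N - mass_ahead N.
Proof.
  unfold backlog, mass_ahead, pending. set (l := used (S N)).
  assert (Hused : lsum y l = sum_f_R0 (fun n => y (greedy n)) N).
  { rewrite <- (lsum_filter_used y (fun _ => true)), filter_true. reflexivity. }
  rewrite minus_sum, <- lsum_seq0, <- Hused.
  rewrite (lsum_filter_negb y (notinb l) (seq 0 (S N))), (lsum_filter_negb y (Nat.ltb N) l).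
  enough (P : Permutation (filter (fun j => negb (notinb l j)) (seq 0 (S N)))
                          (filter (fun j => negb (Nat.ltb N j)) l)).
  { rewrite (lsum_perm y _ _ P). lra. }
  apply NoDup_Permutation; [apply NoDup_filter, seq_NoDup | apply NoDup_filter, used_NoDup |].
  intro j. rewrite !filter_In, in_seq. unfold notinb.
  destruct (Nat.ltb_spec N j), (in_dec Nat.eq_dec j l); cbn [negb];
    intuition auto; try discriminate; lia.
Qed.

Lemma mass_ahead_ge0 N : 0 <= mass_ahead N.
Proof. apply lsum_nonneg. intros; left; apply y_pos. Qed.

Lemma mass_before_S n : mass_before (S n) =
  backlog n + (if in_dec Nat.eq_dec (S n) (used (S n)) then 0 else y (S n)).
Proof.
  unfold mass_before, backlog. rewrite pending_S, lsum_app.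
  destruct (in_dec Nat.eq_dec (S n) (used (S n))); simpl; lra.
Qed.

Lemma backlog_le_mass_before_S n : backlog n <= mass_before (S n).
Proof.
  rewrite mass_before_S. destruct (in_dec Nat.eq_dec (S n) (used (S n))); [lra |].
  pose proof (y_pos (S n)). lra.
Qed.

Lemma backlog_release n : release_step n ->
  backlog n = mass_before n - y (greedy n) /\ delta <= backlog n.
Proof.
  intro HA. pose proof (release_pending n HA) as Hin. apply In_pending in Hin.
  assert (E : backlog n = mass_before n - y (greedy n)).
  { unfold backlog, mass_before, pending. change (used (S n)) with (greedy n :: used n).
    apply lsum_filter_notinb_cons; [apply seq_NoDup | apply in_seq; lia | tauto]. }
  split; [exact E |]. destruct HA as (a & t & Hp & Hd & Ho).
  rewrite E. unfold mass_before. rewrite Hp, Ho. lra.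
Qed.

Lemma backlog_tiny n : tiny_step n -> backlog n = mass_before n.
Proof.
  intros [_ Ho]. unfold backlog, mass_before, pending.
  change (used (S n)) with (greedy n :: used n).
  rewrite filter_notinb_cons_notin; [reflexivity |].
  rewrite in_seq, Ho. pose proof (small_fresh_spec n (used n)). lia.
Qed.

Lemma backlog_tiny_bound n : tiny_step n ->
  backlog n = 0 \/ exists j, In j (pending n (used n)) /\ backlog n < delta + y j.
Proof.
  intro HT. rewrite (backlog_tiny n HT). unfold mass_before.
  destruct HT as [[-> | (a & t & -> & Hl)] _]; [left; reflexivity |].
  right. exists (argmax_y a t). split; [apply argmax_y_In | lra].
Qed.

Lemma backlog_release_S_le n : release_step (S n) -> backlog (S n) <= backlog n.
Proof.
  intro HA. destruct (backlog_release _ HA) as [-> _]. rewrite mass_before_S.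
  destruct (in_dec Nat.eq_dec (S n) (used (S n))) as [_ | Hn].
  - pose proof (y_pos (greedy (S n))). lra.
  - destruct HA as (a & t & Hp & _ & ->).
    assert (Hj : In (S n) (a :: t)) by (rewrite <- Hp; apply In_pending; auto).
    apply argmax_y_ge in Hj. lra.
Qed.

Lemma tiny_step_small n : tiny_step n -> y (greedy n) <= (/2)^n.
Proof. intros [_ ->]. apply small_fresh_spec. Qed.

Lemma used_mass_tiny_tail n0 : (forall n, (n0 <= n)%nat -> tiny_step n) ->
  forall N, (n0 <= N)%nat ->
  sum_f_R0 (fun i => y (greedy i)) N <= sum_f_R0 (fun i => y (greedy i)) n0 + 2 * (/2)^n0.
Proof.
  intros HT N HN.
  enough (Hinv : forall M, (n0 <= M)%nat -> sum_f_R0 (fun i => y (greedy i)) M <=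
            sum_f_R0 (fun i => y (greedy i)) n0 + 2 * (/2)^n0 - 2 * (/2)^M).
  { pose proof (half_pow_pos N). specialize (Hinv N HN). lra. }
  apply (le_ind n0); [lra |]. intros m Hm IH. cbn [sum_f_R0].
  pose proof (tiny_step_small (S m) (HT (S m) ltac:(lia))). pose proof (half_pow_pos m).
  simpl pow in *. lra.
Qed.

Lemma y_bounded : exists C, forall n, y n <= C.
Proof.
  destruct (cauchy_bound y (CV_Cauchy y (exist _ 0 y_cv0))) as [C HC].
  exists C. intro n. apply HC. exists n. reflexivity.
Qed.

(* otherwise the partial sums of [y] would stay bounded *)
Lemma release_steps_unbounded n0 : exists n, (n0 <= n)%nat /\ release_step n.
Proof.
  apply NNPP; intro Hn.
  assert (HT : forall n, (n0 <= n)%nat -> tiny_step n).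
  { intros n Hle. destruct (release_or_tiny n) as [HA | HT]; [exfalso; eauto | exact HT]. }
  destruct y_bounded as [C HC].
  set (O := sum_f_R0 (fun i => y (greedy i))).
  apply y_div, (growing_eventually_bounded_cv _ n0 (delta + C + O n0 + 2 * (/2)^n0));
    [apply partial_sums_growing, y_pos |].
  intros N HN.
  assert (E : sum_f_R0 y N = backlog N - mass_ahead N + O N).
  { rewrite <- partial_sum_backlog, minus_sum. unfold O. lra. }
  assert (Hb : backlog N <= delta + C).
  { destruct (backlog_tiny_bound N (HT N HN)) as [-> | (j & _ & Hj)].
    - pose proof (y_pos 0%nat). pose proof (HC 0%nat). lra.
    - pose proof (HC j). lra. }
  pose proof (mass_ahead_ge0 N). pose proof (used_mass_tiny_tail n0 HT N HN).
  unfold O in *. lra.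
Qed.

(* otherwise [greedy] would map every long enough initial segment onto itself,
   leaving nothing pending *)
Lemma tiny_steps_unbounded n0 : exists n, (n0 <= n)%nat /\ tiny_step n.
Proof.
  apply NNPP; intro Hn.
  assert (HA : forall n, (n0 <= n)%nat -> release_step n).
  { intros n Hle. destruct (release_or_tiny n) as [HA | HT]; [exact HA | exfalso; eauto]. }
  set (L := (n0 + list_max (used n0))%nat).
  assert (Hle : forall i, (i <= L)%nat -> (greedy i <= L)%nat).
  { intros i Hi. destruct (Nat.lt_ge_cases i n0) as [Hlt | Hge].
    - assert (Hu : In (greedy i) (used n0)) by (apply In_used; eauto).
      apply In_le_list_max in Hu. unfold L. lia.
    - pose proof (release_pending i (HA i Hge)) as Hp. apply In_pending in Hp. lia. }
  assert (Hall : incl (seq 0 (S L)) (used (S L))).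
  { apply NoDup_length_incl; [apply used_NoDup | rewrite length_seq, used_length; lia |].
    intros j Hj. apply In_used in Hj. destruct Hj as (i & Hi & <-).
    apply in_seq. specialize (Hle i ltac:(lia)). lia. }
  assert (Hp : pending (S L) (used (S L)) = [S L]).
  { rewrite pending_S. destruct (pending L (used (S L))) as [|j t] eqn:E.
    - destruct (in_dec Nat.eq_dec (S L) (used (S L))) as [Hin | _]; [| reflexivity].
      exfalso. apply In_used in Hin. destruct Hin as (i & Hi & Ei).
      specialize (Hle i ltac:(lia)). lia.
    - exfalso. assert (Hj : In j (pending L (used (S L)))) by (rewrite E; left; auto).
      apply In_pending in Hj. apply (proj2 Hj), Hall, in_seq. lia. }
  destruct (HA (S L) ltac:(unfold L; lia)) as (a & t & Hp' & Hd & _).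
  rewrite Hp in Hp'. injection Hp' as <- <-. unfold lsum in Hd. simpl in Hd. lra.
Qed.

(* an index that is never used stays pending, so every later release step outputs a
   term at least as large as it, which can happen only finitely often *)
Lemma greedy_surj k : exists i, greedy i = k.
Proof.
  apply NNPP; intro Hk.
  assert (Hpend : forall n, (k <= n)%nat -> In k (pending n (used n))).
  { intros n Hn. apply In_pending. split; [exact Hn |].
    intro H. apply In_used in H. destruct H as (i & _ & Hi). eauto. }
  destruct (Un_cv_0_eventually_lt y _ y_cv0 (y_pos k)) as [J HJ].
  destruct (unbounded_NoDup_list release_step release_steps_unbounded k (S J))
    as (l & Hlen & Hnd & Hl).
  assert (Hinc : incl (map greedy l) (seq 0 J)).
  { intros z Hz. apply in_map_iff in Hz. destruct Hz as (i & <- & Hil).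
    destruct (Hl i Hil) as [Hki (a & t & Hp & _ & Ho)].
    assert (Hy : y k <= y (greedy i)).
    { rewrite Ho. apply argmax_y_ge. rewrite <- Hp. auto. }
    apply in_seq. destruct (Nat.lt_ge_cases (greedy i) J) as [Hlt | Hge]; [lia |].
    specialize (HJ _ Hge). lra. }
  apply NoDup_incl_length in Hinc;
    [| apply FinFun.Injective_map_NoDup; [exact greedy_inj | exact Hnd]].
  rewrite length_map, length_seq in Hinc. lia.
Qed.

Lemma pending_eventually_small eps : 0 < eps ->
  exists K, forall n j, (K <= n)%nat -> In j (pending n (used n)) -> y j < eps.
Proof.
  intro He. destruct (Un_cv_0_eventually_lt y _ y_cv0 He) as [J HJ].
  destruct (surj_initial_segment greedy greedy_surj J) as [K HK].
  exists K. intros n j Hn Hj. apply In_pending in Hj.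
  destruct (Nat.lt_ge_cases j J) as [Hlt | Hge]; [exfalso | auto].
  destruct (HK j Hlt) as (i & Hi & <-).
  apply (proj2 Hj), In_used. exists i. split; [lia | auto].
Qed.

Lemma backlog_eventually_ge : exists n1, forall n, (n1 <= n)%nat -> delta <= backlog n.
Proof.
  destruct (release_steps_unbounded 0) as (n1 & _ & H1). exists n1.
  apply (le_ind n1 (fun n => delta <= backlog n)); [apply backlog_release, H1 |].
  intros m _ IH. destruct (release_or_tiny (S m)) as [HA | HT].
  - apply backlog_release, HA.
  - rewrite backlog_tiny by exact HT. pose proof (backlog_le_mass_before_S m). lra.
Qed.

Lemma backlog_eventually_le eps : 0 < eps ->
  exists n2, forall n, (n2 <= n)%nat -> backlog n <= delta + eps.
Proof.
  intro He. destruct (pending_eventually_small eps He) as [K HK].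
  destruct (tiny_steps_unbounded K) as (n2 & Hn2 & HT2). exists n2.
  assert (Htiny : forall n, (K <= n)%nat -> tiny_step n -> backlog n <= delta + eps).
  { intros n Hn HT. destruct (backlog_tiny_bound n HT) as [-> | (j & Hj & Hb)]; [lra |].
    pose proof (HK n j Hn Hj). lra. }
  apply (le_ind n2 (fun n => backlog n <= delta + eps)); [auto |].
  intros m Hm IH. destruct (release_or_tiny (S m)) as [HA | HT].
  - pose proof (backlog_release_S_le m HA). lra.
  - apply Htiny; [lia | exact HT].
Qed.

(* release steps never use an index beyond the current step, and tiny steps
   after [K] use terms at most [(1/2)^K] in total *)
Lemma mass_ahead_eventually_le eps : 0 < eps ->
  exists N0, forall N, (N0 <= N)%nat -> mass_ahead N <= eps.
Proof.
  intro He.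
  destruct (pow_lt_1_zero (/2) ltac:(rewrite Rabs_right; lra) (eps/2) ltac:(lra)) as [K HK].
  specialize (HK K (le_n _)). rewrite Rabs_right in HK by (left; apply half_pow_pos).
  exists (K + list_max (used K))%nat. intros N HN.
  unfold mass_ahead. rewrite lsum_filter_used.
  apply Rle_trans with (sum_f_R0 (fun i => if Nat.leb K i then (/2)^i else 0) N);
    [| pose proof (sum_half_pow_from K N); lra].
  apply sum_Rle. intros i Hi.
  destruct (Nat.ltb_spec N (greedy i)), (Nat.leb_spec K i).
  - destruct (greedy_le_or_small i); [lia | auto].
  - exfalso. assert (Hu : In (greedy i) (used K)) by (apply In_used; eauto).
    apply In_le_list_max in Hu. lia.
  - left. apply half_pow_pos.
  - lra.
Qed.

Lemma greedy_rearr_diff_sum : is_perm_nat greedy /\ rearr_diff_sum y greedy delta.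
Proof.
  split; [split; [exact greedy_inj | exact greedy_surj] |].
  intros eps He.
  destruct backlog_eventually_ge as [n1 H1].
  destruct (backlog_eventually_le (eps/2) ltac:(lra)) as [n2 H2].
  destruct (mass_ahead_eventually_le (eps/2) ltac:(lra)) as [n3 H3].
  exists (n1 + n2 + n3)%nat. intros N HN. unfold R_dist. rewrite partial_sum_backlog.
  specialize (H1 N ltac:(lia)). specialize (H2 N ltac:(lia)). specialize (H3 N ltac:(lia)).
  pose proof (mass_ahead_ge0 N). apply Rabs_def1; lra.
Qed.

End Greedy.

Lemma S_set_0 x : S_set x 0.
Proof.
  exists (fun n => n). split; [exact is_perm_nat_id |].
  apply (Un_cv_ext (fun _ => 0)).
  - intro N. rewrite (sum_eq _ (fun _ => 0)) by (intros; ring). rewrite sum_cte. ring.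
  - intros eps He. exists 0%nat. intros. unfold R_dist. rewrite Rminus_0_r, Rabs_R0. exact He.
Qed.

Lemma S_set_shift x s d : (forall n, 0 < x n) -> Un_cv x 0 ->
  ~ (exists l, Un_cv (sum_f_R0 x) l) -> S_set x s -> 0 < d -> S_set x (s + d).
Proof.
  intros Hpos Hx0 Hdiv [sigma [Hsigma Hs]] Hd.
  set (y := fun n => x (sigma n)).
  destruct (greedy_rearr_diff_sum y d) as [Hpi Hpid].
  - intro n. apply Hpos.
  - exact (Un_cv_perm_0 sigma x Hsigma Hx0).
  - exact (perm_series_divergent sigma x Hsigma Hpos Hdiv).
  - exact Hd.
  - exists (fun n => sigma (greedy y d n)). split; [apply is_perm_nat_comp; assumption |].
    apply (Un_cv_ext (fun N => sum_f_R0 (fun n => x n - x (sigma n)) N +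
                               sum_f_R0 (fun n => y n - y (greedy y d n)) N)).
    + intro N. rewrite <- plus_sum. apply sum_eq. intros. unfold y. ring.
    + apply CV_plus; assumption.
Qed.

Theorem mainTheorem7 (x : nat -> R)
  (hpos : forall n, 0 < x n)
  (hdiv : ~ (exists l, Un_cv (fun N => sum_f_R0 x N) l))
  (hlim : Un_cv x 0) :
  (forall r, S_set x r) \/
  (exists c, (forall r, S_set x r <-> c <= r) \/ (forall r, S_set x r <-> c < r)).
Proof.
  apply upward_closed_halfline.
  - exists 0. apply S_set_0.
  - intros s t Hs Hst. replace t with (s + (t - s)) by ring.
    apply S_set_shift; [exact hpos | exact hlim | exact hdiv | exact Hs | lra].
Qed.
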